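(* A CRN protocol $\Pi=(\mathcal{S},\mathcal{R})$ is stably (resp. haltingly) correct with respect to an interface $\mathcal{I}=(\mathcal{U},\mu,\mathcal{C})$ under a weakly fair scheduler if and only if for every valid initial configuration $\mathbf{c}^0$, every strongly connected component $S$ of $D^{\Pi}_{\mathbf{c}^0}$ satisfies at least one of: (1) some reaction of $\mathcal{R}$ escapes from $S$; or (2) $S\subseteq\mathrm{stab}(Z_{\mathcal{I}}(\mathbf{c}^0))$ (resp. $S\subseteq\mathrm{halt}(Z_{\mathcal{I}}(\mathbf{c}^0))$), where $Z_{\mathcal{I}}(\mathbf{c}^0)=\{\mathbf{c}\in\mathbb{N}^{\mathcal{S}}:(\mu(\mathbf{c}^0),\mu(\mathbf{c}))\in\mathcal{C}\}$.
   Context: CRN protocol $\Pi=(\mathcal{S},\mathcal{R})$: $\mathcal{S}$ finite set of species, $\mathcal{R}\subset\mathbb{N}^{\mathcal{S}}\times\mathbb{N}^{\mathcal{S}}$ finite set of reactions $(\mathbf{r},\mathbf{p})$ with $\|\mathbf{r}\|_1\in\{1,2\}$, $\|\mathbf{r}\|_1\le\|\mathbf{p}\|_1$, every $\mathbf{r}$ with $1\le\|\mathbf{r}\|_1\le2$ is the reactant vector of at least one reaction, void reactions are those with $\mathbf{r}=\mathbf{p}$ (and a void reaction is then the only reaction with reactants $\mathbf{r}$). Configurations are $\mathbf{c}\in\mathbb{N}^{\mathcal{S}}$ with $\|\mathbf{c}\|_1\ge1$; $(\mathbf{r},\mathbf{p})$ is applicable to $\mathbf{c}$ if $\mathbf{r}\le\mathbf{c}$,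 giving $\alpha(\mathbf{c})=\mathbf{c}-\mathbf{r}+\mathbf{p}$; $\operatorname{app}(\mathbf{c})$ is the set of applicable reactions; $\mathbf{c}\stackrel{*}{\rightharpoonup}\mathbf{c}'$ means $\mathbf{c}'$ is reachable by a finite sequence of applicable reactions. The protocol respects finite density ($\mathbf{c}\stackrel{*}{\rightharpoonup}\mathbf{c}'$ implies $\|\mathbf{c}'\|_1\le O(\|\mathbf{c}\|_1)$). For $Z\subseteq\mathbb{N}^{\mathcal{S}}$: $\mathrm{stab}(Z)=\{\mathbf{c}\in Z:\mathbf{c}\stackrel{*}{\rightharpoonup}\mathbf{c}'\Rightarrow\mathbf{c}'\in Z\}$, $\mathrm{halt}(Z)=\{\mathbf{c}\in Z:\mathbf{c}\stackrel{*}{\rightharpoonup}\mathbf{c}'\Rightarrow\mathbf{c}'=\mathbf{c}\}$. The configuration digraph $D^{\Pi}$ has an $\alpha$-labeled edge $\mathbf{c}\to\alpha(\mathbf{c})$ for each $\alpha\in\operatorname{app}(\mathbf{c})$; $D^{\Pi}_{\mathbf{c}}$ is its subgraph induced on configurations reachable from $\mathbf{c}$. A reaction $\alpha$ escapes from a component $S$ if $\alpha\in\operatorname{app}(\mathbf{c})$ and $\alpha(\mathbf{c})\notin S$ for all $\mathbf{c}\in S$. An execution is $\langle\mathbf{c}^t,\alpha^t\rangle_{t\ge0}$ with $\alpha^t\in\operatorname{app}(\mathbf{c}^t)$, $\mathbf{c}^{t+1}=\alpha^t(\mathbf{c}^t)$; it is weakly fair if for every $t$ and $\alpha\in\operatorname{app}(\mathbf{c}^t)$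 there is $t'\ge t$ with $\alpha^{t'}=\alpha$ or $\alpha\notin\operatorname{app}(\mathbf{c}^{t'})$; it stabilizes (resp. halts) into $Z$ if $\mathbf{c}^t\in\mathrm{stab}(Z)$ (resp. $\mathrm{halt}(Z)$) for some $t$. An interface $\mathcal{I}=(\mathcal{U},\mu,\mathcal{C})$ consists of a set $\mathcal{U}$, a map $\mu:\mathcal{S}\to\mathcal{U}$ and a relation $\mathcal{C}\subseteq\mathbb{N}^{\mathcal{U}}\times\mathbb{N}^{\mathcal{U}}$, with $\mu(\mathbf{c})(u)=\sum_{A:\mu(A)=u}\mathbf{c}(A)$. A configuration $\mathbf{c}^0$ is a valid initial configuration if $Z_{\mathcal{I}}(\mathbf{c}^0)\neq\emptyset$. $\Pi$ is stably (resp. haltingly) correct w.r.t. $\mathcal{I}$ under a weakly fair scheduler if every weakly fair execution from a valid initial configuration $\mathbf{c}^0$ stabilizes (resp. halts) into $Z_{\mathcal{I}}(\mathbf{c}^0)$. *)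

From mathcomp Require Import all_boot.
Set Implicit Arguments. Unset Strict Implicit. Unset Printing Implicit Defensive.

Section CRN.
Variable S : finType.

(* vectors in N^S (configurations are those with ||c||_1 >= 1) *)
Definition config := {ffun S -> nat}.
(* a reaction (r, p): reactant vector and product vector *)
Definition reaction := (config * config)%type.

Definition norm1 (c : config) : nat := \sum_(A : S) c A.
Definition le_vec (r c : config) : bool := [forall A, r A <= c A].

Definition crn_protocol (R : seq reaction) : Prop :=
  [/\ (forall a, a \in R -> (1 <= norm1 a.1 <= 2) /\ norm1 a.1 <= norm1 a.2),
      (forall r : config, 1 <= norm1 r <= 2 -> exists p, (r, p) \in R) &
      (forall r p : config, (r, r) \in R -> (r, p) \in R -> p = r)].

Definition applicable (R : seq reaction) (a : reaction) (c : config) : bool :=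
  (a \in R) && le_vec a.1 c.
Definition apply_r (a : reaction) (c : config) : config :=
  [ffun A => c A - a.1 A + a.2 A].

Inductive reach (R : seq reaction) : config -> config -> Prop :=
| reach_refl c : reach R c c
| reach_step c a c' : applicable R a c -> reach R (apply_r a c) c' -> reach R c c'.

Definition finite_density (R : seq reaction) : Prop :=
  exists K : nat, forall c c', 1 <= norm1 c -> reach R c c' -> norm1 c' <= K * norm1 c.

Definition stab (R : seq reaction) (Z : config -> Prop) (c : config) : Prop :=
  Z c /\ forall c', reach R c c' -> Z c'.
Definition halt (R : seq reaction) (Z : config -> Prop) (c : config) : Prop :=
  Z c /\ forall c', reach R c c' -> c' = c.

Section Interface.
Variable U : eqType.
Variable mu : S -> U.
Variable Cr : (U -> nat) -> (U -> nat) -> Prop.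

Definition mu_vec (c : config) : U -> nat := fun u => \sum_(A : S | mu A == u) c A.
Definition Z_I (c0 : config) : config -> Prop := fun c => Cr (mu_vec c0) (mu_vec c).
Definition valid_init (c0 : config) : Prop := 1 <= norm1 c0 /\ exists c, Z_I c0 c.
End Interface.

(* executions <c^t, alpha^t>_t, given as e t = (c^t, alpha^t) *)
Definition execution (R : seq reaction) (e : nat -> config * reaction) : Prop :=
  forall t, applicable R (e t).2 (e t).1 /\ (e t.+1).1 = apply_r (e t).2 (e t).1.
Definition weakly_fair (R : seq reaction) (e : nat -> config * reaction) : Prop :=
  forall t a, applicable R a (e t).1 ->
    exists t', t <= t' /\ ((e t').2 = a \/ ~~ applicable R a (e t').1).

Definition correct_wrt (target : seq reaction -> (config -> Prop) -> config -> Prop)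
  (R : seq reaction) (U : eqType) (mu : S -> U) (Cr : (U -> nat) -> (U -> nat) -> Prop) : Prop :=
  forall c0, valid_init mu Cr c0 ->
  forall e, execution R e -> (e 0).1 = c0 -> weakly_fair R e ->
  exists t, target R (Z_I mu Cr c0) (e t).1.

Definition stably_correct := correct_wrt stab.
Definition haltingly_correct := correct_wrt halt.

(* Sc is a strongly connected component of D^Pi_{c0}: the mutual-reachability
   class of some configuration reachable from c0 *)
Definition is_scc (R : seq reaction) (c0 : config) (Sc : config -> Prop) : Prop :=
  exists c, reach R c0 c /\ forall x, Sc x <-> (reach R c x /\ reach R x c).

Definition escapes (R : seq reaction) (a : reaction) (Sc : config -> Prop) : Prop :=
  forall c, Sc c -> applicable R a c /\ ~ Sc (apply_r a c).

Definition scc_condition (target : seq reaction -> (config -> Prop) -> config -> Prop)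
  (R : seq reaction) (U : eqType) (mu : S -> U) (Cr : (U -> nat) -> (U -> nat) -> Prop) : Prop :=
  forall c0, valid_init mu Cr c0 ->
  forall Sc, is_scc R c0 Sc ->
    (exists a, a \in R /\ escapes R a Sc) \/
    (forall c, Sc c -> target R (Z_I mu Cr c0) c).

End CRN.

(* (<=) By finite density an execution ranges over finitely many
   configurations, so some configuration x recurs infinitely often; from its
   first visit on, the execution stays in the strongly connected component of
   x.  Weak fairness rules out a reaction escaping from that component, so the
   component lies in stab(Z) (resp. halt(Z)), which the execution has reached.
   (=>) If no reaction escapes from the component of c, every reaction either
   fires inside it or is inapplicable at one of its members, so some closed
   walk at c meets every reaction in one of these two ways.  Going from c0 to c
   and then repeating that walk forever is a weakly fair execution; by
   correctness it reaches a configuration of stab(Z) (resp. halt(Z)), which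
   reaches c and hence every member of the component. *)
From mathcomp Require Import all_boot.
From Stdlib Require Import Classical.
Set Implicit Arguments. Unset Strict Implicit. Unset Printing Implicit Defensive.

Definition recurrent (T : Type) (f : nat -> T) (x : T) : Prop :=
  forall n, exists2 m, n <= m & f m = x.

Lemma recurrent_exists (T : eqType) (f : nat -> T) (l : seq T) N :
  (forall m, N <= m -> f m \in l) -> exists x, recurrent f x.
Proof.
elim: l N => [|x l IHl] N fl; first by have := fl N (leqnn N).
have [x_rec|x_not_rec] := classic (recurrent f x); first by exists x.
have [n f_neq_x] := not_all_ex_not _ _ x_not_rec.
apply: (IHl (maxn N n)) => m; rewrite geq_max => /andP[Nm nm].
move: (fl m Nm); rewrite in_cons => /orP[/eqP fx|] //.
by case: f_neq_x; exists m.
Qed.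

Section ReactionNetwork.

Variable S : finType.
Variable R : seq (reaction S).
Implicit Types (x y c : config S) (a : reaction S) (w : seq (reaction S)).

Lemma reach_trans x y z : reach R x y -> reach R y z -> reach R x z.
Proof. by elim=> // {}x a {}y xa _ IH /IH; apply: reach_step. Qed.

Definition scc_of x : config S -> Prop := fun y => reach R x y /\ reach R y x.

Lemma stab_reach Z x y : stab R Z x -> reach R x y -> stab R Z y.
Proof.
move=> [_ stabx] xy; split; first exact: stabx.
by move=> z /(reach_trans xy); apply: stabx.
Qed.

Lemma halt_reach Z x y : halt R Z x -> reach R x y -> halt R Z y.
Proof. by move=> haltx xy; rewrite (haltx.2 y xy). Qed.

Fixpoint walk x w : bool :=
  if w is a :: w' then applicable R a x && walk (apply_r a x) w' else true.

Definition run x w : config S := foldl (fun c a => apply_r a c) x w.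

Definition closed_walk c w : bool := walk c w && (run c w == c).

Lemma reach_walk x y : reach R x y -> exists2 w, walk x w & run x w = y.
Proof.
elim=> [c|c a c' ca _ [w walkw runw]]; first by exists [::].
by exists (a :: w); rewrite /= ?ca.
Qed.

Lemma run_cat x w1 w2 : run x (w1 ++ w2) = run (run x w1) w2.
Proof. exact: foldl_cat. Qed.

Lemma walk_cat x w1 w2 : walk x (w1 ++ w2) = walk x w1 && walk (run x w1) w2.
Proof. by elim: w1 x => [|a w IHw] x //=; rewrite IHw andbA. Qed.

Lemma closed_walk_cat c w1 w2 :
  closed_walk c w1 -> closed_walk c w2 -> closed_walk c (w1 ++ w2).
Proof.
move=> /andP[walk1 /eqP run1] /andP[walk2 run2].
by rewrite /closed_walk walk_cat run_cat run1 walk1 walk2.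
Qed.

Lemma walk_nth a0 x w j :
  walk x w -> j < size w -> applicable R (nth a0 w j) (run x (take j w)).
Proof.
elim: w x j => [|a w IHw] x [|j] //=; first by case/andP.
by case/andP=> _ /IHw; apply.
Qed.

Lemma run_take_nth a0 x w j :
  j < size w -> run x (take j.+1 w) = apply_r (nth a0 w j) (run x (take j w)).
Proof. by move=> jw; rewrite (take_nth a0 jw) /run foldl_rcons. Qed.

Lemma run_take_mod c w j :
  run c w = c -> j <= size w -> run c (take (j %% size w) w) = run c (take j w).
Proof.
move=> runw; rewrite leq_eqVlt => /orP[/eqP->|/modn_small->] //.
by rewrite modnn take0 take_size runw.
Qed.

Lemma run_take_modS a0 c w n :
  run c w = c -> 0 < size w ->
  run c (take (n.+1 %% size w) w) =
  apply_r (nth a0 w (n %% size w)) (run c (take (n %% size w) w)).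
Proof.
move=> runw w_gt0; have n_lt := ltn_pmod n w_gt0.
rewrite -(run_take_nth _ _ n_lt) -(run_take_mod runw n_lt).
by rewrite -[(n %% _).+1]addn1 modnDml addn1.
Qed.

Lemma execution_reach e t t' :
  execution R e -> t <= t' -> reach R (e t).1 (e t').1.
Proof.
move=> exe /subnKC <-; elim: (t' - t) => [|d IHd]; first by rewrite addn0; apply: reach_refl.
apply: reach_trans IHd _; rewrite addnS; have [app -> ] := exe (t + d).
by apply: reach_step app (reach_refl _ _).
Qed.

Lemma norm1_apply a x :
  crn_protocol R -> applicable R a x -> norm1 x <= norm1 (apply_r a x).
Proof.
case=> shapeR _ _ /andP[aR /forallP le_ax]; have [_ r_le_p] := shapeR a aR.
have split_norm (p : config S) :
    \sum_A (x A - a.1 A + p A) = \sum_A (x A - a.1 A) + norm1 p by rewrite big_split.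
have -> : norm1 x = \sum_A (x A - a.1 A + a.1 A).
  by apply: eq_bigr => A _; rewrite subnK.
have -> : norm1 (apply_r a x) = \sum_A (x A - a.1 A + a.2 A).
  by apply: eq_bigr => A _; rewrite ffunE.
by rewrite !split_norm leq_add2l.
Qed.

Lemma norm1_reach x y : crn_protocol R -> reach R x y -> norm1 x <= norm1 y.
Proof.
by move=> protR; elim=> // c a c' ca _; apply: leq_trans (norm1_apply protR ca).
Qed.

Lemma applicable_exists x :
  crn_protocol R -> 1 <= norm1 x -> exists a, applicable R a x.
Proof.
case=> _ completeR _ x_gt0.
have /existsP[A xA_gt0] : [exists A, 0 < x A].
  move: x_gt0; apply: contraLR => /existsPn x0.
  rewrite -ltnNge ltnS leqn0 /norm1 sum_nat_eq0; apply/forallP => A.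
  by rewrite -leqn0 leqNgt x0.
pose r : config S := [ffun B => (B == A) : nat].
have r_norm : norm1 r = 1.
  rewrite /norm1 (bigD1 A) //= ffunE eqxx big1 // => B /negPf BA.
  by rewrite ffunE BA.
have [p rpR] : exists p, (r, p) \in R by apply: completeR; rewrite r_norm.
exists (r, p); rewrite /applicable rpR; apply/forallP => B; rewrite ffunE.
by case: eqP => // ->.
Qed.

Definition small_configs (B : nat) : seq (config S) :=
  [seq [ffun A => nat_of_ord (f A)] | f : {ffun S -> 'I_B.+1}].

Lemma mem_small_configs B x : norm1 x <= B -> x \in small_configs B.
Proof.
move=> xB; apply/imageP; exists [ffun A => inord (x A)] => //.
apply/ffunP => A; rewrite !ffunE inordK // ltnS (leq_trans _ xB) //.
by rewrite /norm1 (bigD1 A) //= leq_addr.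
Qed.

Section ExecutionRecurrence.

Variable e : nat -> config S * reaction S.
Hypothesis exe : execution R e.

Lemma execution_recurrent :
  finite_density R -> 1 <= norm1 (e 0).1 -> exists x, recurrent (fun t => (e t).1) x.
Proof.
move=> [K dense] e0_gt0.
apply: (@recurrent_exists _ _ (small_configs (K * norm1 (e 0).1)) 0) => t _.
by apply/mem_small_configs/dense => //; apply: execution_reach.
Qed.

Lemma recurrent_scc x t0 t :
  recurrent (fun t => (e t).1) x -> (e t0).1 = x -> t0 <= t -> scc_of x (e t).1.
Proof.
move=> x_rec e_t0 t0t; split; first by rewrite -e_t0; apply: execution_reach.
by have [m tm <-] := x_rec t; apply: execution_reach.
Qed.

Lemma fair_not_escapes Sc a t0 :
  weakly_fair R e -> (forall t, t0 <= t -> Sc (e t).1) -> ~ escapes R a Sc.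
Proof.
move=> fair in_Sc esc; have [app_t0 _] := esc _ (in_Sc t0 (leqnn t0)).
have [t' [t0t' fired_or_not]] := fair t0 a app_t0.
have [app_t' leave] := esc _ (in_Sc t' t0t').
case: fired_or_not => [fired|]; last by rewrite app_t'.
by apply: leave; rewrite -fired -(exe t').2; apply/in_Sc/leqW.
Qed.

End ExecutionRecurrence.

Lemma scc_to_correct target (U : eqType) (mu : S -> U) Cr :
  finite_density R -> scc_condition target R mu Cr -> correct_wrt target R mu Cr.
Proof.
move=> dense scc_cond c0 c0_valid e exe e0 fair.
have e0_gt0 : 1 <= norm1 (e 0).1 by rewrite e0; case: c0_valid.
have [x x_rec] := execution_recurrent exe dense e0_gt0.
have [t0 _ e_t0] := x_rec 0.
have in_scc := recurrent_scc exe x_rec e_t0.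
have scc_x : is_scc R c0 (scc_of x).
  by exists x; split=> //; rewrite -e0 -e_t0; apply: execution_reach.
case: (scc_cond c0 c0_valid _ scc_x) => [[a [_ esc]]|target_scc].
  by case: (fair_not_escapes exe fair in_scc esc).
by exists t0; apply/target_scc/in_scc.
Qed.

Definition covers c w a : Prop :=
  a \in w \/ exists2 j, j <= size w & ~~ applicable R a (run c (take j w)).

Lemma covers_catl c w1 w2 a : covers c w1 a -> covers c (w1 ++ w2) a.
Proof.
case=> [aw1|[j jw1 not_app]]; first by left; rewrite mem_cat aw1.
right; exists j; first by rewrite size_cat (leq_trans jw1 (leq_addr _ _)).
rewrite take_cat; case: ltnP => // w1j.
have j_eq : j = size w1 by apply/eqP; rewrite eqn_leq jw1.
by move: not_app; rewrite j_eq subnn take0 cats0 take_size.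
Qed.

Lemma covers_catr c w1 w2 a : covers (run c w1) w2 a -> covers c (w1 ++ w2) a.
Proof.
case=> [aw2|[j jw2 not_app]]; first by left; rewrite mem_cat aw2 orbT.
right; exists (size w1 + j); first by rewrite size_cat leq_add2l.
by rewrite take_cat ltnNge leq_addr /= addKn run_cat.
Qed.

Lemma covers_size_gt0 c w a : applicable R a c -> covers c w a -> 0 < size w.
Proof. by move=> app; case: w => // -[|[j _]] //=; rewrite app. Qed.

Lemma closed_walk_covers c a :
  ~ escapes R a (scc_of c) -> exists2 w, closed_walk c w & covers c w a.
Proof.
move=> not_esc.
have [y [[cy yc] stay]] :
    exists y, scc_of c y /\ ~ (applicable R a y /\ ~ scc_of c (apply_r a y)).
  apply: NNPP => none; apply: not_esc => y scc_y.
  by apply: NNPP => leave; apply: none; exists y.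
have [w1 walk1 run1] := reach_walk cy.
case app: (applicable R a y).
- have [_ ay_c] : scc_of c (apply_r a y) by apply: NNPP => out; apply: stay.
  have [w2 walk2 run2] := reach_walk ay_c.
  exists (w1 ++ a :: w2); last by left; rewrite mem_cat mem_head orbT.
  by rewrite /closed_walk walk_cat run_cat walk1 run1 /= app walk2 run2 eqxx.
- have [w2 walk2 run2] := reach_walk yc.
  exists (w1 ++ w2); first by rewrite /closed_walk walk_cat run_cat walk1 run1 walk2 run2 eqxx.
  by apply: covers_catr; right; exists 0; rewrite // take0 run1 app.
Qed.

Lemma closed_walk_covers_all c (l : seq (reaction S)) :
  (forall a, a \in l -> exists2 w, closed_walk c w & covers c w a) ->
  exists2 w, closed_walk c w & forall a, a \in l -> covers c w a.
Proof.
elim: l => [|b l IHl] cover_each; first by exists [::]; rewrite /closed_walk /= ?eqxx.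
have [wb closed_b covers_b] := cover_each b (mem_head b l).
have [wl closed_l covers_l] : exists2 w, closed_walk c w & forall a, a \in l -> covers c w a.
  by apply: IHl => a al; apply: cover_each; rewrite in_cons al orbT.
exists (wb ++ wl); first exact: closed_walk_cat.
move=> a; rewrite in_cons => /orP[/eqP->|al]; first exact: covers_catl.
by apply: covers_catr; move: closed_b => /andP[_ /eqP->]; apply: covers_l.
Qed.

Section Lasso.

Variables (a0 : reaction S) (c0 c : config S) (P W : seq (reaction S)).
Hypotheses (walkP : walk c0 P) (runP : run c0 P = c).
Hypotheses (walkW : walk c W) (runW : run c W = c) (W_gt0 : 0 < size W).

Definition lasso (t : nat) : config S * reaction S :=
  if t < size P then (run c0 (take t P), nth a0 P t)
  else let k := (t - size P) %% size W in (run c (take k W), nth a0 W k).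

Lemma lasso_loop n :
  lasso (size P + n) = (run c (take (n %% size W) W), nth a0 W (n %% size W)).
Proof. by rewrite /lasso ltnNge leq_addr /= addKn. Qed.

Lemma lasso_start : (lasso 0).1 = c0.
Proof.
rewrite /lasso; case: ifP => [_|/negbT]; first by rewrite take0.
by rewrite -leqNgt leqn0 => /nilP P0; rewrite sub0n mod0n take0 /= -runP P0.
Qed.

Lemma lasso_execution : execution R lasso.
Proof.
move=> t; split.
  by rewrite /lasso; case: ifP => tP /=; [exact: walk_nth | exact/walk_nth/ltn_pmod].
case: (ltngtP t.+1 (size P)) => [tP | Pt | tP].
- by rewrite /lasso tP (ltnW tP) /=; apply: run_take_nth; apply: ltnW.
- by move: Pt; rewrite ltnS => /subnKC <-; rewrite -addnS !lasso_loop; apply: run_take_modS.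
- have tP' : t < size P by rewrite -tP.
  rewrite -[t.+1]addn0 tP lasso_loop mod0n take0 /lasso tP' /=.
  by rewrite -(run_take_nth _ _ tP') tP take_size runP.
Qed.

Lemma lasso_period_ge t j : t <= size P + (t * size W + j).
Proof. by rewrite addnCA; apply: leq_trans (leq_pmulr t W_gt0) (leq_addr _ _). Qed.

Lemma lasso_returns t : (lasso (size P + t * size W)).1 = c.
Proof. by rewrite lasso_loop modnMl take0. Qed.

Lemma lasso_fair : (forall a, a \in R -> covers c W a) -> weakly_fair R lasso.
Proof.
move=> cover t a /andP[aR _].
case: (cover a aR) => [aW|[j jW not_app]].
- exists (size P + (t * size W + index a W)); split; first exact: lasso_period_ge.
  by left; rewrite lasso_loop /= modnMDl modn_small ?index_mem ?nth_index.
- exists (size P + (t * size W + j)); split; first exact: lasso_period_ge.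
  by right; rewrite lasso_loop /= modnMDl run_take_mod.
Qed.

End Lasso.

Lemma correct_to_scc target (U : eqType) (mu : S -> U) Cr :
  crn_protocol R -> (forall Z x y, target R Z x -> reach R x y -> target R Z y) ->
  correct_wrt target R mu Cr -> scc_condition target R mu Cr.
Proof.
move=> protR target_reach correct c0 c0_valid Sc [c [c0c Sc_scc]].
have [escape|no_escape] := classic (exists a, a \in R /\ escapes R a Sc); [by left | right].
have stays a : a \in R -> ~ escapes R a (scc_of c).
  move=> aR esc; apply: no_escape; exists a; split=> // y /Sc_scc /esc[app out].
  by split=> // /Sc_scc.
have [W /andP[walkW /eqP runW] coverW] :=
  closed_walk_covers_all (fun a aR => closed_walk_covers (stays a aR)).
have c_gt0 : 1 <= norm1 c by apply: leq_trans (norm1_reach protR c0c); case: c0_valid.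
have [b app_b] := applicable_exists protR c_gt0.
have W_gt0 := covers_size_gt0 app_b (coverW b (andP app_b).1).
have [P walkP runP] := reach_walk c0c.
pose e := lasso (c, c) c0 c P W.
have exe : execution R e by apply: lasso_execution.
have e0 : (e 0).1 = c0 by apply: lasso_start.
have fair : weakly_fair R e by apply: lasso_fair.
have [t target_t] := correct c0 c0_valid e exe e0 fair.
have back_to_c : (e (size P + t * size W)).1 = c by apply: lasso_returns.
move=> y /Sc_scc[cy _]; apply: target_reach target_t _; apply: reach_trans cy.
rewrite -back_to_c; apply: execution_reach exe _.
by rewrite -[t * size W]addn0; apply: lasso_period_ge.
Qed.

End ReactionNetwork.

Theorem lemma3p2 (S : finType) (R : seq (reaction S)) (U : eqType) (mu : S -> U)
    (Cr : (U -> nat) -> (U -> nat) -> Prop) :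
  crn_protocol R -> finite_density R ->
  (stably_correct R mu Cr <-> scc_condition (@stab S) R mu Cr) /\
  (haltingly_correct R mu Cr <-> scc_condition (@halt S) R mu Cr).
Proof.
move=> protR dense; split; split; try exact: scc_to_correct.
- by apply: correct_to_scc protR _; apply: stab_reach.
- by apply: correct_to_scc protR _; apply: halt_reach.
Qed.
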